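(* For every semisimple MV-algebra $M$ and every compact Hausdorff space $Y$, the convex set $\mathcal{P}(M,C(Y))$ has an extreme point.
   Context: For an MV-algebra $(M,\oplus,\neg,0)$: $1\coloneqq\neg 0$, $a\vee b\coloneqq\neg(\neg a\oplus b)\oplus b$, $a\wedge b\coloneqq\neg(\neg a\vee\neg b)$. A probability map is a function $p\colon M\to N$ between MV-algebras such that for all $a,b\in M$: (P1) $p(a\oplus b)=p(a)\oplus p(b\wedge\neg a)$; (P2) $p(\neg a)=\neg p(a)$; (P3) $p(1)=1$. $C(Y)$ is the MV-algebra of continuous functions $Y\to[0,1]$ with pointwise operations $\min(a+b,1)$, $1-a$. $\mathcal{P}(M,C(Y))$ is the set of probability maps $M\to C(Y)$, a convex subset of the real linear space of maps $M\to C_{\mathbb{R}}(Y)$. $M$ is semisimple if the intersection of its maximal ideals is $\{0\}$. *)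

From HB Require Import structures.
From mathcomp Require Import all_boot all_order all_algebra.
From mathcomp Require Import all_classical all_reals all_analysis.
Set Implicit Arguments. Unset Strict Implicit. Unset Printing Implicit Defensive.
Import Order.TTheory GRing.Theory Num.Theory numFieldNormedType.Exports.
Local Open Scope ring_scope.

Record MVAlgebra := MkMV {
  mv_car :> Type;
  mv_oplus : mv_car -> mv_car -> mv_car;
  mv_neg : mv_car -> mv_car;
  mv_zero : mv_car;
  mv_oplusA : forall x y z, mv_oplus x (mv_oplus y z) = mv_oplus (mv_oplus x y) z;
  mv_oplusC : forall x y, mv_oplus x y = mv_oplus y x;
  mv_oplus0 : forall x, mv_oplus x mv_zero = x;
  mv_negK : forall x, mv_neg (mv_neg x) = x;
  mv_oplus1 : forall x, mv_oplus x (mv_neg mv_zero) = mv_neg mv_zero;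
  mv_luk : forall x y, mv_oplus (mv_neg (mv_oplus (mv_neg x) y)) y
                     = mv_oplus (mv_neg (mv_oplus (mv_neg y) x)) x
}.

Arguments mv_oplus {m}.
Arguments mv_neg {m}.

Section MVDefs.
Variable M : MVAlgebra.
Definition mv_one : M := mv_neg (mv_zero M).
Definition mv_join (a b : M) : M := mv_oplus (mv_neg (mv_oplus (mv_neg a) b)) b.
Definition mv_meet (a b : M) : M := mv_neg (mv_join (mv_neg a) (mv_neg b)).
Definition mv_le (a b : M) : Prop := mv_oplus (mv_neg a) b = mv_one.

Definition mv_ideal (I : M -> Prop) : Prop :=
  [/\ I (mv_zero M),
      (forall a b, mv_le a b -> I b -> I a) &
      (forall a b, I a -> I b -> I (mv_oplus a b))].

Definition mv_proper (I : M -> Prop) : Prop := exists x, ~ I x.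

Definition mv_maximal_ideal (I : M -> Prop) : Prop :=
  [/\ mv_ideal I, mv_proper I &
      forall J : M -> Prop, mv_ideal J -> mv_proper J ->
        (forall x, I x -> J x) -> forall x, J x -> I x].

Definition mv_semisimple : Prop :=
  forall x : M, (forall I, mv_maximal_ideal I -> I x) -> x = mv_zero M.
End MVDefs.

(* Probability maps M -> C(Y), C(Y) = continuous functions Y -> [0,1]
   with pointwise operations a (+) b = min(a+b,1), ~a = 1 - a. *)
Definition prob_map (M : MVAlgebra) (R : realType) (Y : topologicalType)
    (p : M -> Y -> R) : Prop :=
  [/\ (forall a, continuous (p a)),
      (forall a y, 0 <= p a y <= 1),
      (forall a b y, p (mv_oplus a b) y
           = Num.min (p a y + p (mv_meet b (mv_neg a)) y) 1),
      (forall a y, p (mv_neg a) y = 1 - p a y) &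
      (forall y, p (mv_one M) y = 1)].

Definition extreme_prob_map (M : MVAlgebra) (R : realType) (Y : topologicalType)
    (p : M -> Y -> R) : Prop :=
  prob_map p /\
  forall (p1 p2 : M -> Y -> R) (t : R), prob_map p1 -> prob_map p2 ->
    0 < t < 1 -> (forall a y, p a y = t * p1 a y + (1 - t) * p2 a y) ->
    p1 = p2.

From mathcomp Require Import all_boot all_order all_algebra.
From mathcomp Require Import all_classical all_reals all_analysis.
From mathcomp Require Import zify lra.
From Stdlib Require Import Classical.
Set Implicit Arguments. Unset Strict Implicit. Unset Printing Implicit Defensive.
Import Order.TTheory GRing.Theory Num.Theory numFieldNormedType.Exports.

(* Semisimplicity and nontriviality give a maximal ideal I, and modulo I the
   natural order of M is total and archimedean.  For e outside I let N_e x be the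
   least n with x <= n.e modulo I.  Every state s vanishing on I satisfies
   |N_e(1) s(x) - N_e(x)| <= 2, with equality N_e(1) s(x) = N_e(x) when e is an
   atom modulo I; if there is no such atom, repeated halving makes N_e(1)
   arbitrarily large.  So the ratios N_e(x) / N_e(1) pin down s: there is at most
   one state vanishing on I, and an ultrafilter limit of the ratios is one.  The
   constant probability map with that value is extreme, because in any convex
   decomposition both summands, evaluated at a point, are states vanishing on I. *)

Local Notation "x ⊕ y" := (mv_oplus x y) (at level 50, left associativity).
Local Notation "¬ x" := (mv_neg x) (at level 35, right associativity).

(** * Limits of real functions along filters *)

Section FilterLimits.
Variable R : realType.
Local Open Scope ring_scope.
Local Open Scope classical_set_scope.

Lemma cvg_dist_le (T : Type) (F : set_system T) {FF : Filter F} (v δ : T -> R) (l : R) :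
  δ @ F --> 0 -> (forall t, `|v t - l| <= δ t) -> v @ F --> l.
Proof.
move=> hδ hle; apply: (squeeze_cvgr (f := fun t => l - δ t) (h := fun t => l + δ t)).
- by apply: filterE => t; rewrite -ler_distl.
- by rewrite -[X in _ --> X]subr0; apply: cvgB => //; exact: cvg_cst.
- by rewrite -[X in _ --> X]addr0; apply: cvgD => //; exact: cvg_cst.
Qed.

Lemma cvg_bounded_defect_eq0 (T : Type) (F : set_system T) {FF : ProperFilter F}
    (v δ : T -> R) (l : R) :
  δ @ F --> 0 -> v @ F --> l -> (forall t, `|v t| <= δ t) -> l = 0.
Proof.
move=> hδ hv hle.
have hv0 : v @ F --> 0 by apply: cvg_dist_le hδ _ => t; rewrite subr0.
exact: norm_cvg_unique hv hv0.
Qed.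

Lemma cvg_min1 (T : Type) (F : set_system T) {FF : Filter F} (f : T -> R) (l : R) :
  f @ F --> l -> (fun t => Num.min (f t) 1) @ F --> Num.min l 1.
Proof.
move=> hf; apply: (@continuous_cvg _ _ _ _ _ _ (fun z : R => Num.min z 1)) => //.
have hid : continuous (@id R) by move=> ?; exact: cvg_id.
by apply: (min_fun_continuous hid); exact: cst_continuous.
Qed.

Lemma ultrafilter_cvg_unit (T : Type) (G : set_system T) (u : T -> R) :
  UltraFilter G -> (forall t, 0 <= u t <= 1) -> exists l : R, u @ G --> l.
Proof.
move=> GU h01.
have Fs : G (u @^-1` `[(0:R), 1]%classic).
  by apply: filterE => t /=; rewrite in_itv; exact: h01.
have [l [_ cl]] := @segment_compact R 0 1 (u @ G) (fmap_proper_filter u _) Fs.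
(* An ultrafilter converges to each of its cluster points. *)
exists l => A nA.
case: (in_ultra_setVsetC (u @^-1` A) GU) => // hc.
by have := cl (~` A) A hc nA; case=> z [].
Qed.
End FilterLimits.

Section NatRatios.
Variable R : realFieldType.
Local Open Scope ring_scope.

Lemma nat_ratio_min (p b : nat) : (0 < b)%N ->
  (minn p b)%:R / b%:R = Num.min (p%:R / b%:R) 1 :> R.
Proof.
move=> hb; have hb0 : 0 < b%:R :> R by rewrite ltr0n.
case: (leqP p b) => h; first by apply/esym/min_l; rewrite ler_pdivrMr // mul1r ler_nat.
rewrite divff ?gt_eqF //; apply/esym/min_r.
by rewrite ler_pdivlMr // mul1r ler_nat ltnW.
Qed.

Lemma nat_ratio_dist (p q b d : nat) : (p <= q + d)%N -> (q <= p + d)%N ->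
  `|p%:R / b%:R - q%:R / b%:R| <= d%:R / b%:R :> R.
Proof.
move=> hpq hqp; rewrite -mulrBl normrM normfV normr_nat ler_wpM2r ?invr_ge0 //.
have h1 : p%:R <= q%:R + d%:R :> R by rewrite -natrD ler_nat.
have h2 : q%:R <= p%:R + d%:R :> R by rewrite -natrD ler_nat.
by rewrite ler_norml; apply/andP; split; lra.
Qed.
End NatRatios.

(** * Elementary arithmetic of MV-algebras *)

Section MVAlgebraTheory.
Variable M : MVAlgebra.
Local Notation mv0 := (mv_zero M).
Local Notation mv1 := (mv_one M).
Local Notation le := (@mv_le M).
Implicit Types x y z a b c e : M.

Definition mv_diff x y : M := ¬ (¬ x ⊕ y).
Local Notation "x ⊖ y" := (mv_diff x y) (at level 50, left associativity).

Lemma mv_oplusCA x y z : x ⊕ (y ⊕ z) = y ⊕ (x ⊕ z).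
Proof. by rewrite !mv_oplusA (mv_oplusC x). Qed.
Lemma mv_oplusAC x y z : x ⊕ y ⊕ z = x ⊕ z ⊕ y.
Proof. by rewrite -!mv_oplusA (mv_oplusC y). Qed.
Lemma mv_oplus0l x : mv0 ⊕ x = x. Proof. by rewrite mv_oplusC mv_oplus0. Qed.
Lemma mv_oplus1l x : mv1 ⊕ x = mv1. Proof. by rewrite mv_oplusC mv_oplus1. Qed.
Lemma mv_neg1 : ¬ mv1 = mv0. Proof. exact: mv_negK. Qed.
Lemma mv_oplusNx x : ¬ x ⊕ x = mv1.
Proof. by have := mv_luk x mv1; rewrite mv_neg1 mv_oplus0l mv_oplus1 => <-. Qed.
Lemma mv_oplusxN x : x ⊕ ¬ x = mv1. Proof. by rewrite mv_oplusC mv_oplusNx. Qed.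
Lemma mv_neg_diff x y : ¬ (x ⊖ y) = ¬ x ⊕ y. Proof. exact: mv_negK. Qed.
Lemma mv_joinE x y : mv_join x y = x ⊖ y ⊕ y. Proof. by []. Qed.
Lemma mv_joinC x y : mv_join x y = mv_join y x. Proof. exact: mv_luk. Qed.

Lemma mv_diff_eq0 x y : le x y -> x ⊖ y = mv0.
Proof. by rewrite /mv_le /mv_diff => ->; exact: mv_neg1. Qed.
Lemma mv_join_idr x y : le x y -> mv_join x y = y.
Proof. by move=> /mv_diff_eq0 h; rewrite /mv_join -/(mv_diff x y) h mv_oplus0l. Qed.
Lemma mv_join_idl x y : le x y -> mv_join y x = y.
Proof. by move=> h; rewrite mv_joinC mv_join_idr. Qed.

Lemma mv_le_refl x : le x x. Proof. exact: mv_oplusNx. Qed.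
Lemma mv_le_oplusr x z : le x (x ⊕ z).
Proof. by rewrite /mv_le mv_oplusA mv_oplusNx mv_oplus1l. Qed.
Lemma mv_le_oplusl x z : le x (z ⊕ x).
Proof. by rewrite mv_oplusC; exact: mv_le_oplusr. Qed.
Lemma mv_oplus_diff x y : y ⊕ (x ⊖ y) = mv_join x y.
Proof. exact: mv_oplusC. Qed.
Lemma mv_leP x y : le x y <-> exists z, y = x ⊕ z.
Proof.
split=> [h|[z ->]]; last exact: mv_le_oplusr.
by exists (y ⊖ x); rewrite mv_oplus_diff mv_join_idl.
Qed.
Lemma mv_le_trans y x z : le x y -> le y z -> le x z.
Proof. by move=> /mv_leP[a ->] /mv_leP[b ->]; rewrite -mv_oplusA; exact: mv_le_oplusr. Qed.
Lemma mv_le_anti x y : le x y -> le y x -> x = y.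
Proof. by move=> h1 h2; rewrite -(mv_join_idr h1) mv_joinC mv_join_idr. Qed.
Lemma mv_le0x x : le mv0 x. Proof. by rewrite /mv_le mv_oplus1l. Qed.
Lemma mv_lex1 x : le x mv1. Proof. exact: mv_oplus1. Qed.
Lemma mv_lex0 x : le x mv0 -> x = mv0.
Proof. by move=> h; apply: mv_le_anti h (mv_le0x _). Qed.
Lemma mv_le1x x : le mv1 x -> x = mv1.
Proof. exact: mv_le_anti (mv_lex1 _). Qed.
Lemma mv_le_oplus2r x y z : le x y -> le (x ⊕ z) (y ⊕ z).
Proof. by move=> /mv_leP[a ->]; apply/mv_leP; exists a; rewrite mv_oplusAC. Qed.
Lemma mv_le_oplus2l x y z : le x y -> le (z ⊕ x) (z ⊕ y).
Proof. by rewrite !(mv_oplusC z); exact: mv_le_oplus2r. Qed.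
Lemma mv_le_oplus2 x y z w : le x y -> le z w -> le (x ⊕ z) (y ⊕ w).
Proof. by move=> h1 h2; apply: mv_le_trans (mv_le_oplus2r _ h1) (mv_le_oplus2l _ h2). Qed.
Lemma mv_le_neg x y : le x y -> le (¬ y) (¬ x).
Proof. by rewrite /mv_le mv_negK mv_oplusC. Qed.
Lemma mv_residuation a b c : le (a ⊖ b) c <-> le a (b ⊕ c).
Proof. by rewrite /mv_le mv_neg_diff mv_oplusA. Qed.
Lemma mv_le_oplus_diff a b : le a (b ⊕ (a ⊖ b)).
Proof. exact/mv_residuation/mv_le_refl. Qed.
Lemma mv_le_diff a b : le (a ⊖ b) a.
Proof. exact/mv_residuation/mv_le_oplusl. Qed.
Lemma mv_le_diff_oplus2r a b c : le ((a ⊕ c) ⊖ (b ⊕ c)) (a ⊖ b).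
Proof.
by apply/mv_residuation; rewrite mv_oplusAC; apply: mv_le_oplus2r; exact: mv_le_oplus_diff.
Qed.

Lemma mv_join_le a b c : le a c -> le b c -> le (mv_join a b) c.
Proof.
move=> hac hbc.
have hc : c = b ⊕ (c ⊖ b) by rewrite mv_oplus_diff mv_join_idl.
have hu : le b (¬ a ⊕ b) by exact: mv_le_oplusl.
rewrite /mv_le hc mv_joinE.
have -> : ¬ (a ⊖ b ⊕ b) = (¬ a ⊕ b) ⊖ b by [].
by rewrite mv_oplusA -mv_joinE mv_join_idl // -mv_oplusA mv_oplus_diff mv_join_idl.
Qed.
Lemma mv_meetC a b : mv_meet a b = mv_meet b a. Proof. by rewrite /mv_meet mv_joinC. Qed.
Lemma mv_le_meetl a b : le (mv_meet a b) a.
Proof.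
rewrite /mv_meet -{2}(mv_negK a); apply: mv_le_neg.
by rewrite mv_joinC mv_joinE; exact: mv_le_oplusl.
Qed.
Lemma mv_le_meetr a b : le (mv_meet a b) b.
Proof. by rewrite mv_meetC; exact: mv_le_meetl. Qed.
Lemma mv_le_meet w a b : le w a -> le w b -> le w (mv_meet a b).
Proof.
move=> h1 h2; rewrite /mv_meet -(mv_negK w); apply: mv_le_neg.
by apply: mv_join_le; apply: mv_le_neg.
Qed.
Lemma mv_meet_diff x y : mv_meet x y = x ⊖ (x ⊖ y).
Proof.
rewrite /mv_meet mv_joinC /mv_join /mv_diff !mv_negK; congr (¬ _).
by rewrite mv_oplusC (mv_oplusC y).
Qed.
Lemma mv_meet_oplus_diff x y : x = mv_meet x y ⊕ (x ⊖ y).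
Proof. by rewrite mv_meet_diff mv_oplusC mv_oplus_diff mv_join_idl //; exact: mv_le_diff. Qed.
Lemma mv_diff_oplusl b e : (b ⊕ e) ⊖ b = mv_meet (¬ b) e.
Proof. by rewrite mv_meet_diff /mv_diff !mv_negK mv_oplusC. Qed.
Lemma mv_oplus_meetN a b : a ⊕ b = a ⊕ mv_meet b (¬ a).
Proof.
by rewrite mv_meetC -mv_diff_oplusl mv_oplus_diff mv_join_idl //; exact: mv_le_oplusr.
Qed.

Lemma mv_prelinearity x y : mv_meet (x ⊖ y) (y ⊖ x) = mv0.
Proof.
set u := x ⊖ y; set v := y ⊖ x; set m := mv_meet x y.
have hx : x = m ⊕ u by exact: mv_meet_oplus_diff.
have hy : y = m ⊕ v by rewrite /m mv_meetC; exact: mv_meet_oplus_diff.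
have hv : le v (v ⊖ u).
  have e : v = (m ⊕ v) ⊖ (m ⊕ u) by rewrite -hy -hx.
  by rewrite {1}e !(mv_oplusC m); exact: mv_le_diff_oplus2r.
by rewrite mv_meetC mv_meet_diff (mv_diff_eq0 hv).
Qed.
Lemma mv_le_meet_oplus a b c : le (mv_meet (a ⊕ b) (a ⊕ c)) (a ⊕ mv_meet b c).
Proof.
apply/(mv_residuation _ a); apply: mv_le_meet; apply/mv_residuation.
  exact: mv_le_meetl.
exact: mv_le_meetr.
Qed.
Lemma mv_meet_oplus_le b c d : le (mv_meet b (c ⊕ d)) (mv_meet b c ⊕ mv_meet b d).
Proof.
set a := mv_meet b d.
have h1 := mv_le_meet_oplus a b c.
rewrite (mv_oplusC a b) (mv_oplusC a c) (mv_oplusC a) in h1.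
apply: mv_le_trans h1; apply: mv_le_meet.
  exact: mv_le_trans (mv_le_meetl _ _) (mv_le_oplusr _ _).
apply: mv_le_trans (mv_le_meet_oplus c b d); apply: mv_le_meet; last exact: mv_le_meetr.
exact: mv_le_trans (mv_le_meetl _ _) (mv_le_oplusl _ _).
Qed.
Lemma mv_meet_oplus_eq0 b c d :
  mv_meet b c = mv0 -> mv_meet b d = mv0 -> mv_meet b (c ⊕ d) = mv0.
Proof.
move=> h1 h2; apply: mv_lex0.
by rewrite -(mv_oplus0 mv0) -{1}h1 -{1}h2; exact: mv_meet_oplus_le.
Qed.

Fixpoint mv_natmul n x : M := if n is n'.+1 then mv_natmul n' x ⊕ x else mv0.

Lemma mv_natmulD m n x : mv_natmul (m + n) x = mv_natmul m x ⊕ mv_natmul n x.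
Proof.
elim: n => [|n IH]; first by rewrite addn0 mv_oplus0.
by rewrite addnS /= IH mv_oplusA.
Qed.
Lemma mv_natmul_leq m n x : (m <= n)%N -> le (mv_natmul m x) (mv_natmul n x).
Proof. by move=> /subnKC <-; rewrite mv_natmulD; exact: mv_le_oplusr. Qed.
Lemma mv_natmulM m n x : mv_natmul (m * n) x = mv_natmul m (mv_natmul n x).
Proof. by elim: m => [|m IH] //=; rewrite mulSn mv_natmulD IH mv_oplusC. Qed.
Lemma mv_meet_natmulr_eq0 b c n :
  mv_meet b c = mv0 -> mv_meet b (mv_natmul n c) = mv0.
Proof.
move=> h; elim: n => [|n IH] /=; last exact: mv_meet_oplus_eq0.
by apply: mv_lex0; exact: mv_le_meetr.
Qed.
Lemma mv_meet_natmul_eq0 a b n :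
  mv_meet a b = mv0 -> mv_meet (mv_natmul n a) (mv_natmul n b) = mv0.
Proof.
move=> h; apply: mv_meet_natmulr_eq0; rewrite mv_meetC.
by apply: mv_meet_natmulr_eq0; rewrite mv_meetC.
Qed.

(** * The order modulo a maximal ideal *)

(* [mv_le_mod I x y] says that the class of x is below the class of y in M/I. *)
Definition mv_le_mod (I : M -> Prop) x y := I (x ⊖ y).

Section MaximalIdeal.
Variable I : M -> Prop.
Hypothesis maxI : mv_maximal_ideal I.
Local Notation "x ≼ y" := (mv_le_mod I x y) (at level 70).

Lemma max_ideal0 : I mv0. Proof. by case: maxI => -[]. Qed.
Lemma max_ideal_le a b : le a b -> I b -> I a.
Proof. by case: maxI => -[_ h _] _ _; exact: h. Qed.
Lemma max_idealD a b : I a -> I b -> I (a ⊕ b).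
Proof. by case: maxI => -[_ _ h] _ _; exact: h. Qed.
Lemma max_ideal_not1 : ~ I mv1.
Proof. by case: maxI => _ [x nx] _ h; apply: nx; exact: max_ideal_le (mv_lex1 _) h. Qed.

Lemma le_mod_of_le x y : le x y -> x ≼ y.
Proof. by move=> /mv_diff_eq0 h; rewrite /mv_le_mod h; exact: max_ideal0. Qed.
Lemma le_mod_refl x : x ≼ x. Proof. exact/le_mod_of_le/mv_le_refl. Qed.
Lemma le_mod_x1 x : x ≼ mv1. Proof. exact/le_mod_of_le/mv_lex1. Qed.
Lemma le_mod_trans y x z : x ≼ y -> y ≼ z -> x ≼ z.
Proof.
move=> h1 h2; apply: max_ideal_le (max_idealD h1 h2); apply/mv_residuation.
apply: mv_le_trans (mv_le_oplus_diff x y) _.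
rewrite mv_oplusA mv_oplusAC; exact/mv_le_oplus2r/mv_le_oplus_diff.
Qed.
Lemma le_mod_oplus2r x y z : x ≼ y -> x ⊕ z ≼ y ⊕ z.
Proof. by apply: max_ideal_le; exact: mv_le_diff_oplus2r. Qed.
Lemma le_mod_oplus2 x y z w : x ≼ y -> z ≼ w -> x ⊕ z ≼ y ⊕ w.
Proof.
move=> h1 h2; apply: le_mod_trans (le_mod_oplus2r z h1) _.
by rewrite !(mv_oplusC y); exact: le_mod_oplus2r.
Qed.
Lemma le_mod_neg x y : x ≼ y -> ¬ y ≼ ¬ x.
Proof. by rewrite /mv_le_mod /mv_diff mv_negK mv_oplusC. Qed.
Lemma le_mod_x0 x : x ≼ mv0 <-> I x.
Proof. by rewrite /mv_le_mod /mv_diff mv_oplus0 mv_negK. Qed.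
Lemma le_mod_ideal x y : I x -> x ≼ y.
Proof. by apply: max_ideal_le; exact: mv_le_diff. Qed.
Lemma le_mod_1x x : mv1 ≼ x <-> I (¬ x).
Proof. by rewrite /mv_le_mod /mv_diff mv_neg1 mv_oplus0l. Qed.
Lemma le_mod_natmul n a b : a ≼ b -> mv_natmul n a ≼ mv_natmul n b.
Proof. by move=> h; elim: n => [|n IH] /=; [exact: le_mod_refl | exact: le_mod_oplus2]. Qed.
Lemma le_mod_join x c : c ≼ x -> mv_join x c ≼ x.
Proof.
by apply: max_ideal_le; apply/mv_residuation; rewrite mv_oplusC mv_joinC; exact: mv_le_refl.
Qed.

(* The ideal generated by I and a is all of M by maximality; writing 1 in it gives n. *)
Lemma max_ideal_archimedean a : ~ I a -> exists n, I (¬ mv_natmul n a).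
Proof.
move=> na.
pose J z := exists i n, I i /\ le z (i ⊕ mv_natmul n a).
have idJ : mv_ideal J.
  split.
  - by exists mv0, 0; split; [exact: max_ideal0 | exact: mv_le0x].
  - by move=> x y hxy [i [n [Ii hy]]]; exists i, n; split => //; exact: mv_le_trans hy.
  - move=> x y [i [n [Ii hx]]] [j [m [Ij hy]]]; exists (i ⊕ j), (n + m).
    split; first exact: max_idealD.
    apply: mv_le_trans (mv_le_oplus2 hx hy) _.
    by rewrite mv_natmulD -!mv_oplusA (mv_oplusCA (mv_natmul n a)); exact: mv_le_refl.
have IJ x : I x -> J x by exists x, 0; split => //=; rewrite mv_oplus0; exact: mv_le_refl.
have Ja : J a.
  by exists mv0, 1; split; [exact: max_ideal0 | rewrite /= !mv_oplus0l; exact: mv_le_refl].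
have [i [n [Ii h1]]] : J mv1.
  apply: NNPP => nJ1; apply: na; case: maxI => _ _ maxJ.
  exact: (maxJ J idJ (ex_intro _ mv1 nJ1) IJ a Ja).
exists n; apply: max_ideal_le Ii.
by rewrite /mv_le mv_negK mv_oplusC; exact: mv_le1x.
Qed.

Lemma le_mod_total x y : x ≼ y \/ y ≼ x.
Proof.
apply: NNPP => /not_or_and [nu nv].
have [n1 h1] := max_ideal_archimedean nu; have [n2 h2] := max_ideal_archimedean nv.
set n := (n1 + n2)%N; set u := x ⊖ y in nu h1; set v := y ⊖ x in nv h2.
have e1 : I (¬ mv_natmul n u).
  by apply: max_ideal_le h1; apply/mv_le_neg/mv_natmul_leq; exact: leq_addr.
have e2 : I (¬ mv_natmul n v).
  by apply: max_ideal_le h2; apply/mv_le_neg/mv_natmul_leq; exact: leq_addl.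
have disj : mv_meet (mv_natmul n u) (mv_natmul n v) = mv0.
  exact/mv_meet_natmul_eq0/mv_prelinearity.
apply: max_ideal_not1; apply: max_ideal_le (max_idealD e1 e2).
have -> : mv1 = mv_join (¬ mv_natmul n u) (¬ mv_natmul n v).
  by rewrite -(mv_negK (mv_join _ _)) -/(mv_meet _ _) disj.
by rewrite mv_joinE; apply: mv_le_oplus2r; exact: mv_le_diff.
Qed.

Lemma le_mod_oplus_cancel b e : b ⊕ e ≼ b -> ~ mv1 ≼ b -> I e.
Proof.
rewrite /mv_le_mod mv_diff_oplusl => h nb.
case: (le_mod_total e (¬ b)) => h2.
  by rewrite (mv_meet_oplus_diff e (¬ b)) mv_meetC; exact: max_idealD.
by exfalso; apply/nb/le_mod_1x; rewrite (mv_meet_oplus_diff (¬ b) e); exact: max_idealD.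
Qed.

Lemma natmul_le_mod_leq j k e :
  mv_natmul j e ≼ mv_natmul k e -> ~ mv1 ≼ mv_natmul k e -> ~ I e -> (j <= k)%N.
Proof.
move=> h nk ne; rewrite leqNgt; apply/negP => hkj; apply/ne/(le_mod_oplus_cancel _ nk).
by apply: le_mod_trans h; apply: le_mod_of_le; exact: (mv_natmul_leq _ hkj).
Qed.

Lemma le_mod_neg_oplus a b e :
  b ⊕ e ≼ ¬ a -> ~ mv1 ≼ b -> ~ I e -> ~ mv1 ≼ a ⊕ b.
Proof.
move=> h nb ne /le_mod_1x hab; apply/ne/(le_mod_oplus_cancel _ nb).
by apply: le_mod_trans h _; rewrite /mv_le_mod /mv_diff mv_negK.
Qed.

(** * Counting multiples of an element modulo the ideal *)

(* The junk value 0 is only reached when e lies in I. *)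
Definition mv_count e x : nat :=
  if pselect (exists n, `[< x ≼ mv_natmul n e >]) is left h then ex_minn h else 0.

Section CountingFunction.
Variable e : M.
Hypothesis ne : ~ I e.
Local Notation N := (mv_count e).
Local Notation b := (N mv1).

Lemma mv_count_spec x : x ≼ mv_natmul (N x) e /\ forall n, x ≼ mv_natmul n e -> (N x <= n)%N.
Proof.
rewrite /mv_count; case: pselect => [h|[]].
  by case: ex_minnP => m /asboolP hm hmin; split=> // n hn; apply/hmin/asboolP.
have [n hn] := max_ideal_archimedean ne.
by exists n; apply/asboolP/(le_mod_trans (le_mod_x1 x))/le_mod_1x.
Qed.
Lemma le_mod_count x : x ≼ mv_natmul (N x) e. Proof. by case: (mv_count_spec x). Qed.
Lemma count_min x n : x ≼ mv_natmul n e -> (N x <= n)%N.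
Proof. by case: (mv_count_spec x) => _; apply. Qed.
Lemma le_mod_of_lt_count x n : (n < N x)%N -> mv_natmul n e ≼ x.
Proof.
move=> h; case: (le_mod_total x (mv_natmul n e)) => // /count_min.
by rewrite leqNgt h.
Qed.
Lemma count_le_mod x y : x ≼ y -> (N x <= N y)%N.
Proof. by move=> h; apply/count_min/(le_mod_trans h)/le_mod_count. Qed.
Lemma count_le_one x : (N x <= b)%N. Proof. exact/count_le_mod/le_mod_x1. Qed.
Lemma count_ideal x : I x -> N x = 0.
Proof. by move=> h; apply/eqP; rewrite -leqn0; apply/count_min/le_mod_ideal. Qed.
Lemma lt_count_one k : (k < b)%N <-> ~ mv1 ≼ mv_natmul k e.
Proof.
split=> [h /count_min|h]; first by rewrite leqNgt h.
rewrite ltnNge; apply/negP => hb; apply/h/(le_mod_trans (le_mod_count mv1)).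
exact/le_mod_of_le/mv_natmul_leq.
Qed.
Lemma count_one_gt0 : (0 < b)%N.
Proof.
rewrite lt0n; apply/negP => /eqP h; have := le_mod_count mv1.
by rewrite h => /le_mod_x0/max_ideal_not1.
Qed.

Lemma count_oplus_le x z : (N (x ⊕ z) <= N x + N z)%N.
Proof. by apply: count_min; rewrite mv_natmulD; apply: le_mod_oplus2; exact: le_mod_count. Qed.

(* (N x - 1).e and (N z - 1).e lie below x and z, and below b the multiples of e
   are strictly increasing modulo I. *)
Lemma count_oplus_ge x z : (N (x ⊕ z) < b)%N -> (N x + N z <= N (x ⊕ z) + 2)%N.
Proof.
move=> hk.
have hx : (N x <= N (x ⊕ z))%N by apply/count_le_mod/le_mod_of_le/mv_le_oplusr.
have hz : (N z <= N (x ⊕ z))%N by apply/count_le_mod/le_mod_of_le/mv_le_oplusl.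
case hn: (N x) => [|n]; first by rewrite add0n; apply: leq_trans hz (leq_addr _ _).
case hm: (N z) => [|m]; first by rewrite addn0 -hn; apply: leq_trans hx (leq_addr _ _).
have hnm : mv_natmul (n + m) e ≼ x ⊕ z.
  by rewrite mv_natmulD; apply: le_mod_oplus2; apply: le_mod_of_lt_count; rewrite ?hn ?hm.
have := natmul_le_mod_leq (le_mod_trans hnm (le_mod_count _)) (iffLR (lt_count_one _) hk) ne.
lia.
Qed.
Lemma count_neg_ge x : (b <= N x + N (¬ x))%N.
Proof.
by apply: count_min; rewrite -(mv_oplusxN x) mv_natmulD; apply: le_mod_oplus2; exact: le_mod_count.
Qed.
Lemma count_neg_le x : (N x + N (¬ x) <= b + 2)%N.
Proof.
have hy := count_le_one (¬ x).
case hn: (N x) (count_le_one x) => [|[|n]] hx; [lia | lia |].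
case hm: (N (¬ x)) hy => [|m] hy; first lia.
have h : mv_natmul n e ⊕ e ≼ ¬ mv_natmul m e.
  apply: (le_mod_trans (y := x)); first by apply: (@le_mod_of_lt_count _ n.+1); rewrite hn.
  by rewrite -{1}(mv_negK x); apply/le_mod_neg/le_mod_of_lt_count; rewrite hm.
have := le_mod_neg_oplus h (iffLR (lt_count_one n) ltac:(lia)) ne.
by rewrite -mv_natmulD => /lt_count_one; lia.
Qed.

Section Atom.
Hypothesis atom : forall f, ~ I f -> e ≼ f.

Lemma natmul_count_le_mod x : mv_natmul (N x) e ≼ x.
Proof.
case hn: (N x) => [|n]; first exact/le_mod_of_le/mv_le0x.
have h1 : mv_natmul n e ≼ x by apply: le_mod_of_lt_count; rewrite hn.
have h2 : ~ I (x ⊖ mv_natmul n e) by move=> /count_min; rewrite hn ltnn.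
apply: (le_mod_trans (le_mod_oplus2 (le_mod_refl _) (atom h2))).
by rewrite mv_oplus_diff; exact: le_mod_join.
Qed.
Lemma count_oplus_atom x z : N (x ⊕ z) = minn (N x + N z) b.
Proof.
have := count_oplus_le x z; have := count_le_one (x ⊕ z).
case: (ltnP (N (x ⊕ z)) b) => hk; last lia.
have h : mv_natmul (N x + N z) e ≼ x ⊕ z.
  by rewrite mv_natmulD; apply: le_mod_oplus2; exact: natmul_count_le_mod.
have := natmul_le_mod_leq (le_mod_trans h (le_mod_count _)) (iffLR (lt_count_one _) hk) ne.
lia.
Qed.
Lemma count_neg_atom x : N (¬ x) = (b - N x)%N.
Proof.
suff : (N x + N (¬ x) <= b)%N by have := count_neg_ge x; lia.
case hn: (N x) => [|n]; first by rewrite add0n; exact: count_le_one.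
have h : mv_natmul n e ⊕ e ≼ ¬ mv_natmul (N (¬ x)) e.
  change (mv_natmul n.+1 e ≼ ¬ mv_natmul (N (¬ x)) e); rewrite -hn.
  apply: le_mod_trans (natmul_count_le_mod x) _.
  by rewrite -{1}(mv_negK x); apply/le_mod_neg/natmul_count_le_mod.
have hB : ~ mv1 ≼ mv_natmul n e by apply/lt_count_one; rewrite -hn; exact: count_le_one.
have := le_mod_neg_oplus h hB ne.
by rewrite -mv_natmulD => /lt_count_one; lia.
Qed.
End Atom.
End CountingFunction.

Definition mv_atom_mod e := ~ I e /\ forall f, ~ I f -> e ≼ f.

Lemma halve_mod e : ~ I e -> ~ mv_atom_mod e ->
  exists d, [/\ ~ I d, mv_natmul 2 d ≼ e & ~ mv1 ≼ d].
Proof.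
move=> ne natom; have [f [nf hef]] : exists f, ~ I f /\ ~ e ≼ f.
  apply: NNPP => h; apply: natom; split=> // f nf; apply: NNPP => hf.
  by apply: h; exists f.
have hfe : f ≼ e by case: (le_mod_total e f).
have hj : f ⊕ (e ⊖ f) ≼ e by rewrite mv_oplus_diff; exact: le_mod_join.
have n1f : ~ mv1 ≼ f by move=> h; exact/hef/(le_mod_trans (le_mod_x1 e) h).
case: (le_mod_total f (e ⊖ f)) => hd.
  exists f; split => //; rewrite /= mv_oplus0l; apply: le_mod_trans hj.
  exact: le_mod_oplus2 (le_mod_refl _) hd.
exists (e ⊖ f); split => //; last by move=> h; apply/n1f/(le_mod_trans h hd).
by rewrite /= mv_oplus0l; apply: le_mod_trans hj; exact: le_mod_oplus2 hd (le_mod_refl _).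
Qed.

Lemma count_one_lt_halve e d : ~ I e -> ~ I d -> mv_natmul 2 d ≼ e -> ~ mv1 ≼ d ->
  (mv_count e mv1 < mv_count d mv1)%N.
Proof.
move=> ne nd hde n1d; set c := mv_count d mv1.
have hc2 : (2 <= c)%N.
  by apply/(lt_count_one nd 1); rewrite /= mv_oplus0l.
have [hc hc'] : (c <= uphalf c * 2 /\ uphalf c < c)%N.
  by have := odd_double_half c; rewrite uphalf_half -muln2; case: (odd c) => /=; lia.
apply: leq_ltn_trans hc'; apply: (count_min ne).
apply: le_mod_trans (le_mod_count nd mv1) _.
apply: (le_mod_trans (le_mod_of_le (mv_natmul_leq d hc))).
by rewrite mv_natmulM; exact: le_mod_natmul.
Qed.

Lemma count_one_unbounded : ~ (exists e, mv_atom_mod e) ->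
  forall K, exists e, ~ I e /\ (K <= mv_count e mv1)%N.
Proof.
move=> noatom; elim=> [|K [e [ne hK]]]; first by exists mv1; split => //; exact: max_ideal_not1.
have [d [nd hd n1d]] := halve_mod ne (fun ae => noatom (ex_intro _ e ae)).
by exists d; split => //; exact: leq_ltn_trans hK (count_one_lt_halve ne nd hd n1d).
Qed.

(** * States vanishing on the ideal *)

Section States.
Variable R : realFieldType.
Local Open Scope ring_scope.

Definition mv_state (s : M -> R) :=
  [/\ forall a, 0 <= s a <= 1,
      forall a b, s (a ⊕ b) = Num.min (s a + s (mv_meet b (¬ a))) 1,
      forall a, s (¬ a) = 1 - s a & s mv1 = 1].

Definition approx_state (δ : R) (s : M -> R) :=
  [/\ forall a, 0 <= s a <= 1,
      forall a b, `|s (a ⊕ b) - Num.min (s a + s (mv_meet b (¬ a))) 1| <= δ,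
      forall a, `|s (¬ a) - (1 - s a)| <= δ & s mv1 = 1].

Definition mv_count_ratio e x : R := (mv_count e x)%:R / (mv_count e mv1)%:R.

Section State.
Variable s : M -> R.
Hypothesis s_state : mv_state s.
Hypothesis s_ideal : forall x, I x -> s x = 0.

Lemma state_ge0 x : 0 <= s x. Proof. by case: s_state => /(_ x) /andP[]. Qed.
Lemma state_le1 x : s x <= 1. Proof. by case: s_state => /(_ x) /andP[]. Qed.
Lemma state_oplus a c : s (a ⊕ c) = Num.min (s a + s (mv_meet c (¬ a))) 1.
Proof. by case: s_state. Qed.
Lemma state_neg a : s (¬ a) = 1 - s a. Proof. by case: s_state. Qed.
Lemma state_one : s mv1 = 1. Proof. by case: s_state. Qed.

Lemma state_le a c : le a c -> s a <= s c.
Proof. by move=> /mv_leP [z ->]; rewrite state_oplus le_min state_le1 lerDl state_ge0. Qed.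
Lemma state_oplus_le a c : s (a ⊕ c) <= s a + s c.
Proof. by rewrite state_oplus ge_min lerD2l (state_le (mv_le_meetl _ _)). Qed.
Lemma state_le_mod x y : x ≼ y -> s x <= s y.
Proof.
move=> h; apply: le_trans (state_le (mv_le_oplus_diff x y)) _.
by apply: le_trans (state_oplus_le _ _) _; rewrite (s_ideal h) addr0.
Qed.
Lemma state_oplus_disj a c : c ≼ ¬ a -> s (a ⊕ c) = s a + s c.
Proof.
move=> h; rewrite state_oplus.
have -> : s (mv_meet c (¬ a)) = s c.
  apply/eqP; rewrite eq_le (state_le (mv_le_meetl _ _)) /=.
  rewrite {1}(mv_meet_oplus_diff c (¬ a)).
  by apply: le_trans (state_oplus_le _ _) _; rewrite (s_ideal h) addr0.
by apply: min_l; rewrite -lerBrDl -state_neg; exact: state_le_mod.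
Qed.
Lemma state_natmul_le k e : s (mv_natmul k e) <= k%:R * s e.
Proof.
elim: k => [|k IH] /=; first by rewrite mul0r s_ideal //; exact: max_ideal0.
by apply: le_trans (state_oplus_le _ _) _; rewrite -natr1 mulrDl mul1r lerD2r.
Qed.

Section Counting.
Variable e : M.
Hypothesis ne : ~ I e.
Local Notation N := (mv_count e).
Local Notation b := (N mv1).

Lemma state_natmul k : (k < b)%N -> s (mv_natmul k e) = k%:R * s e.
Proof.
elim: k => [|k IH] hk /=; first by rewrite mul0r s_ideal //; exact: max_ideal0.
rewrite state_oplus_disj; last first.
  case: (le_mod_total e (¬ mv_natmul k e)) => // h; exfalso.
  apply: (iffLR (lt_count_one ne _) hk).
  by rewrite /= -(mv_oplusxN (mv_natmul k e)); exact: le_mod_oplus2 (le_mod_refl _) h.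
by rewrite IH ?(ltnW hk) // -natr1 mulrDl mul1r.
Qed.

Lemma state_count_bounds x :
  [/\ s x <= (N x)%:R * s e, ((N x)%:R - 1) * s e <= s x,
      1 <= b%:R * s e & (b%:R - 1) * s e <= 1].
Proof.
have hNx := count_le_one ne x; have hb := count_one_gt0 ne.
split.
- exact: le_trans (state_le_mod (le_mod_count ne x)) (state_natmul_le _ _).
- case hn: (N x) hNx => [|n] hNx.
    by rewrite sub0r mulN1r (le_trans _ (state_ge0 x)) // oppr_le0 state_ge0.
  rewrite -natr1 addrK -state_natmul //.
  by apply/state_le_mod/(le_mod_of_lt_count ne); rewrite hn.
- rewrite -[X in X <= _]state_one.
  exact: le_trans (state_le_mod (le_mod_count ne _)) (state_natmul_le _ _).
- rewrite -(prednK hb) -natr1 addrK -state_natmul ?state_le1 //.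
  by rewrite prednK.
Qed.

Lemma state_count_near x : `|b%:R * s x - (N x)%:R| <= 2.
Proof.
have [h1 h2 h3 h4] := state_count_bounds x.
have hNb : (N x)%:R <= b%:R :> R by rewrite ler_nat; exact: count_le_one.
have hσ0 := state_ge0 e; have hσ1 := state_le1 e.
have hb0 : 0 <= b%:R :> R by []; have hN0 : 0 <= (N x)%:R :> R by [].
have p1 : b%:R * s x <= b%:R * ((N x)%:R * s e) by rewrite ler_wpM2l.
have p2 : (N x)%:R * (b%:R * s e) <= (N x)%:R * (1 + s e) by rewrite ler_wpM2l //; lra.
have p3 : (N x)%:R * s e <= b%:R * s e by rewrite ler_wpM2r.
rewrite ler_norml; apply/andP; split; last by nra.
have [hN|hN] : (N x)%:R = 0 :> R \/ 1 <= (N x)%:R :> R.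
  by case: (N x) => [|n]; [left | right; rewrite ler1n].
  by rewrite hN; nra.
have p4 : b%:R * (((N x)%:R - 1) * s e) <= b%:R * s x by rewrite ler_wpM2l.
have p5 : ((N x)%:R - 1) * 1 <= ((N x)%:R - 1) * (b%:R * s e) by rewrite ler_wpM2l // subr_ge0.
nra.
Qed.

Lemma state_count_ratio_near x : `|s x - mv_count_ratio e x| <= 2 / b%:R.
Proof.
have hb : 0 < b%:R :> R by rewrite ltr0n; exact: count_one_gt0.
rewrite ler_pdivlMr // -[X in _ * X](gtr0_norm hb) -normrM mulrBl.
by rewrite /mv_count_ratio mulfVK ?gt_eqF // mulrC; exact: state_count_near.
Qed.

Section Atom.
Hypothesis atom : forall f, ~ I f -> e ≼ f.

Lemma state_natmul_atom k : (k <= b)%N -> s (mv_natmul k e) = k%:R * s e.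
Proof.
rewrite leq_eqVlt => /orP[/eqP->|]; last exact: state_natmul.
have hb := count_one_gt0 ne; rewrite -(prednK hb) /=.
have hb1 : (b.-1 < b)%N by rewrite prednK.
rewrite state_oplus_disj; last by apply/atom => /le_mod_1x; exact/(lt_count_one ne).
by rewrite state_natmul // -natr1 mulrDl mul1r.
Qed.

Lemma state_count_ratio_atom x : s x = mv_count_ratio e x.
Proof.
have hb : (0 < b)%N := count_one_gt0 ne.
have hbσ : b%:R * s e = 1.
  rewrite -state_natmul_atom //; apply/le_anti; rewrite state_le1 /=.
  by rewrite -[X in X <= _]state_one; exact/state_le_mod/(le_mod_count ne).
have -> : s x = s (mv_natmul (N x) e).
  apply/le_anti; rewrite !state_le_mod //.
    exact: natmul_count_le_mod.
  exact: le_mod_count.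
have hb0 : b%:R != 0 :> R by rewrite pnatr_eq0 -lt0n.
by rewrite state_natmul_atom ?count_le_one // -(mulKf hb0 (s e)) hbσ mulr1.
Qed.
End Atom.
End Counting.
End State.

Section CountRatio.
Variable e : M.
Hypothesis ne : ~ I e.
Local Notation N := (mv_count e).
Local Notation b := (N mv1).

Lemma count_ratio_ideal x : I x -> mv_count_ratio e x = 0.
Proof. by move=> hx; rewrite /mv_count_ratio count_ideal // mul0r. Qed.

Lemma count_ratio_approx (d : nat) :
  (forall x z, N (x ⊕ z) <= minn (N x + N z) b <= N (x ⊕ z) + d)%N ->
  (forall x, b - N x <= N (¬ x) <= b - N x + d)%N ->
  approx_state (d%:R / b%:R) (mv_count_ratio e).
Proof.
move=> hoplus hneg; have hb := count_one_gt0 ne.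
have hb0 : 0 < b%:R :> R by rewrite ltr0n.
split.
- move=> x; rewrite divr_ge0 //= ler_pdivrMr // mul1r ler_nat; exact: count_le_one.
- move=> x y; rewrite {1}(mv_oplus_meetN x y) -mulrDl -natrD -nat_ratio_min //.
  by have /andP[h1 h2] := hoplus x (mv_meet y (¬ x)); apply: nat_ratio_dist; lia.
- move=> x; have hx := count_le_one ne x.
  rewrite /mv_count_ratio -[X in _ - (X - _)](divff (lt0r_neq0 hb0)) -mulrBl -natrB //.
  by have /andP[h1 h2] := hneg x; apply: nat_ratio_dist; lia.
- by rewrite /mv_count_ratio divff ?gt_eqF.
Qed.

Lemma count_ratio_approx_state : approx_state (2 / b%:R) (mv_count_ratio e).
Proof.
apply: count_ratio_approx => [x z|x].
  have := count_oplus_le ne x z; have := count_le_one ne (x ⊕ z).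
  case: (ltnP (N (x ⊕ z)) b) => [/(count_oplus_ge ne)|]; lia.
by have := count_neg_ge ne x; have := count_neg_le ne x; lia.
Qed.

Lemma count_ratio_approx_state_atom : (forall f, ~ I f -> e ≼ f) ->
  approx_state 0 (mv_count_ratio e).
Proof.
move=> atom; have := @count_ratio_approx 0; rewrite mul0r; apply=> [x z|x].
  by rewrite (count_oplus_atom ne atom) addn0 leqnn.
by rewrite (count_neg_atom ne atom) addn0 leqnn.
Qed.
End CountRatio.
End States.

(** * Existence and uniqueness of the state vanishing on the ideal *)

Section StateLimits.
Variable R : realType.
Local Open Scope ring_scope.
Local Open Scope classical_set_scope.

Lemma approx_states_limit (T : Type) (F : set_system T) {FF : ProperFilter F}
    (u : T -> M -> R) (δ : T -> R) (h : M -> R) :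
  δ @ F --> 0 -> (forall t, approx_state (δ t) (u t)) ->
  (forall x, (fun t => u t x) @ F --> h x) -> mv_state h.
Proof.
move=> hδ hu hh; split.
- move=> x; apply: (closed_cvg (fun z : R => 0 <= z <= 1)) (hh x).
    by have := @itv_closed _ R 0 1; rewrite set_itvcc.
  by apply: filterE => t; case: (hu t).
- move=> a b; apply/eqP; rewrite -subr_eq0; apply/eqP.
  apply: (cvg_bounded_defect_eq0 hδ (cvgB (hh _) (cvg_min1 (cvgD (hh _) (hh _))))) => t.
  by case: (hu t) => _ hoplus _ _; exact: hoplus.
- move=> a; apply/eqP; rewrite -subr_eq0; apply/eqP.
  apply: (cvg_bounded_defect_eq0 hδ (cvgB (hh _) (cvgB (cvg_cst _) (hh _)))) => t.
  by case: (hu t) => _ _ hneg _; exact: hneg.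
- have := hh mv1; rewrite (_ : (fun t => u t mv1) = fun=> 1).
    by move/norm_cvg_unique; apply; exact: cvg_cst.
  by apply/funext => t; case: (hu t).
Qed.

Lemma count_ratio_approximations : exists (e : nat -> M) (δ : nat -> R),
  [/\ δ @ \oo --> 0, forall k, ~ I (e k),
      forall k, approx_state (δ k) (mv_count_ratio R (e k)) &
      forall s, mv_state s -> (forall x, I x -> s x = 0) ->
        forall k x, `|s x - mv_count_ratio R (e k) x| <= δ k].
Proof.
(* An atom modulo I gives exact ratios; otherwise N_e 1 is unbounded. *)
case: (classic (exists a, mv_atom_mod a)) => [[a [na atom]]|noatom].
  exists (fun=> a), (fun=> 0); split=> //; first exact: cvg_cst.
  - by move=> k; exact: count_ratio_approx_state_atom.
  - by move=> s hs hI k x; rewrite (state_count_ratio_atom hs hI na atom) subrr normr0.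
have [e he] := boolp.choice (fun k => count_one_unbounded noatom k.+2).
pose δ k : R := 2 / (mv_count (e k) mv1)%:R.
exists e, δ; split.
- apply: (cvg_dist_le (δ := fun k => 2 * harmonic k)).
    by rewrite -(mulr0 2); apply: cvgM; [exact: cvg_cst | exact: cvg_harmonic].
  move=> k; have hk : (k.+1 < mv_count (e k) mv1)%N := (he k).2.
  rewrite subr0 ger0_norm ?divr_ge0 // ler_pM2l // lef_pV2 ?posrE ?ltr0n //; last lia.
  by rewrite ler_nat ltnW.
- by move=> k; case: (he k).
- by move=> k; exact: count_ratio_approx_state (he k).1.
- by move=> s hs hI k x; exact: (state_count_ratio_near hs hI (he k).1).
Qed.

Lemma exists_state_vanishing : exists h : M -> R, mv_state h /\ forall x, I x -> h x = 0.
Proof.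
have [e [δ [hδ ne happrox _]]] := count_ratio_approximations.
have [G [GU hG]] := ultraFilterLemma (F := \oo) _.
have hGδ : δ @ G --> 0 by apply: cvg_trans hδ => A /hG.
have lim x : exists l : R, (fun k => mv_count_ratio R (e k) x) @ G --> l.
  by apply: ultrafilter_cvg_unit GU _ => k; case: (happrox k).
have [h hh] := boolp.choice lim.
exists h; split; first exact: approx_states_limit hGδ happrox hh.
move=> x hx; have := hh x; rewrite (_ : (fun k => _) = fun=> 0).
  by move/norm_cvg_unique; apply; exact: cvg_cst.
by apply/funext => k; rewrite (count_ratio_ideal _ (ne k) hx).
Qed.

Lemma state_vanishing_unique (s1 s2 : M -> R) :
  mv_state s1 -> (forall x, I x -> s1 x = 0) ->
  mv_state s2 -> (forall x, I x -> s2 x = 0) -> s1 =1 s2.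
Proof.
have [e [δ [hδ _ _ hnear]]] := count_ratio_approximations.
move=> hs1 hI1 hs2 hI2 x.
have lim s : mv_state s -> (forall x, I x -> s x = 0) ->
    (fun k => mv_count_ratio R (e k) x) @ \oo --> s x.
  by move=> hs hI; apply: cvg_dist_le hδ _ => k; rewrite distrC; exact: hnear.
exact: norm_cvg_unique (lim _ hs1 hI1) (lim _ hs2 hI2).
Qed.
End StateLimits.
End MaximalIdeal.
End MVAlgebraTheory.

Lemma semisimple_max_ideal (M : MVAlgebra) :
  mv_zero M <> mv_one M -> mv_semisimple M -> exists I : M -> Prop, mv_maximal_ideal I.
Proof.
move=> h01 hss; apply: NNPP => noI; apply/h01/esym/hss => I maxI.
by case: noI; exists I.
Qed.

Section ProbabilityMaps.
Variables (M : MVAlgebra) (R : realType) (Y : topologicalType).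
Local Open Scope ring_scope.

Lemma prob_map_state (p : M -> Y -> R) (y : Y) : prob_map p -> mv_state (p^~ y).
Proof. by case=> _ h1 h2 h3 h4; split. Qed.

Lemma prob_map_cst (h : M -> R) : mv_state h -> prob_map (fun a (_ : Y) => h a).
Proof. by case=> h1 h2 h3 h4; split=> // a; exact: cst_continuous. Qed.

Lemma convex_comb_eq0 (t a b : R) : 0 < t < 1 -> 0 <= a -> 0 <= b ->
  t * a + (1 - t) * b = 0 -> a = 0 /\ b = 0.
Proof.
move=> /andP[t0 t1] a0 b0 hab.
have ta0 : 0 <= t * a by rewrite mulr_ge0 // ltW.
have tb0 : 0 <= (1 - t) * b by rewrite mulr_ge0 // subr_ge0 ltW.
move/eqP: hab; rewrite paddr_eq0 // !mulf_eq0 subr_eq0 (gt_eqF t0) (gt_eqF t1) /=.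
by case/andP=> /eqP-> /eqP->.
Qed.
End ProbabilityMaps.

Theorem corollary3p13 (M : MVAlgebra) (R : realType) (Y : topologicalType) :
  mv_zero M <> mv_one M ->
  mv_semisimple M ->
  hausdorff_space Y -> compact [set: Y] ->
  exists p : M -> Y -> R, extreme_prob_map p.
Proof.
(* The constant map below is extreme for every Y, compact Hausdorff or not. *)
move=> h01 hss _ _.
have [I maxI] := semisimple_max_ideal h01 hss.
have [h [hs hI]] := @exists_state_vanishing _ _ maxI R.
exists (fun a _ => h a); split=> [|p1 p2 t hp1 hp2 ht hdec]; first exact: prob_map_cst.
apply/funext => a; apply/funext => y.
have vanish x : I x -> p1 x y = 0%R /\ p2 x y = 0%R.
  move=> hx; apply: (convex_comb_eq0 ht).
  - exact: state_ge0 (prob_map_state y hp1) x.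
  - exact: state_ge0 (prob_map_state y hp2) x.
  - by rewrite -hdec hI.
by apply: (state_vanishing_unique maxI (prob_map_state y hp1) _ (prob_map_state y hp2))
  => x /vanish[].
Qed.
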